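(* Let $p_0\in\mathbb{N}$, $z\in\tilde{\mathcal{A}}_{conv.}$ and $X:=a^{p_0}+bz\in\tilde{\mathcal{A}}_{conv.}$. If $U\in\widehat{\mathcal{A}}$ is such that $UX\in\tilde{\mathcal{A}}_{conv.}$, then $U\in\tilde{\mathcal{A}}_{conv.}$.
   Context: $\widehat{\mathcal{A}}$ is the algebra of formal power series $\sum_{p,q\ge0}\gamma_{p,q}a^pb^q$ in variables $a,b$ with $ab-ba=b^2$ (the $(a,b)$-adic completion of the polynomial algebra with this relation). $\tilde{\mathcal{A}}_{conv.}\subset\widehat{\mathcal{A}}$ is the subalgebra of series with $|\gamma_{p,q}|\le C_RR^{p+q}q!$ for some $R>1$, $C_R>0$. *)

From HB Require Import structures.
From mathcomp Require Import all_boot all_order all_algebra.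
From mathcomp Require Import reals.
From mathcomp Require Import complex.
Set Implicit Arguments. Unset Strict Implicit. Unset Printing Implicit Defensive.
Import Order.TTheory GRing.Theory Num.Theory.
Local Open Scope ring_scope.

(* An element of \hat A is represented by its normal-ordered coefficients:
   F p q = gamma_{p,q}, the coefficient of a^p b^q. *)
Definition series (R : realType) := nat -> nat -> R[i].

Section Alg.
Variable R : realType.
Local Notation C := (R[i]).

(* Normal ordering: reord q r i j = coefficient of a^i b^j in b^q a^r,
   computed from b^q a^{r+1} = (b^q a^r) a and b^j a = a b^j - j b^{j+1}. *)
Fixpoint reord (q r : nat) : nat -> nat -> C :=
  match r with
  | 0 => fun i j => ((i == 0%N) && (j == q))%:R
  | r'.+1 => fun i j =>
      (if i is i'.+1 then reord q r' i' j else 0)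
      - (if j is j'.+1 then j'%:R * reord q r' i j' else 0)
  end.

Definition mono (p0 q0 : nat) : series R :=
  fun p q => ((p == p0) && (q == q0))%:R.

Definition sadd (F G : series R) : series R := fun p q => F p q + G p q.

(* product: (sum F_{p,q} a^p b^q)(sum G_{r,s} a^r b^s)
   = sum F_{p,q} G_{r,s} a^p (b^q a^r) b^s *)
Definition smul (F G : series R) : series R := fun m n =>
  \sum_(p < m.+1) \sum_(s < n.+1) \sum_(q < n.+1) \sum_(r < (m + n).+1)
     F p q * G r s * reord q r (m - p) (n - s).

Definition conv (F : series R) : Prop :=
  exists Rr : R, 1 < Rr /\ exists Cr : R, 0 < Cr /\
    forall p q : nat, `|F p q| <= ((Cr * Rr ^+ (p + q) * (q`!)%:R)%:C)%C.
End Alg.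

From mathcomp Require Import all_boot all_order all_algebra.
From mathcomp Require Import reals complex.
From mathcomp Require Import ring lra zify.
Set Implicit Arguments. Unset Strict Implicit. Unset Printing Implicit Defensive.
Import Order.TTheory GRing.Theory Num.Theory.
Local Open Scope ring_scope.

(** In normal order, b^q a^r only involves monomials a^i b^j with q <= j and
    i + j = q + r, with coefficients at most 2^r j! / q! in modulus.  This makes
    conv stable under products, and shows that in the coefficient of a^(k+p0) b^n
    of U (a^p0 + b z) the coefficients U_{p,n} contribute exactly U_{k,n}, all
    other terms involving only the U_{p,q} with q < n.  A strong induction on n
    then gives |U_{k,n}| <= K M^k N^n n!, where M dominates the radii of
    a^p0 + b z and of the product, and N >> M^p0 pays for the shift by a^p0;
    geometric weights 2^-e absorb the number of terms. *)

Lemma leq_fact_mul s j : (s`! * j`! <= (s + j)`!)%N.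
Proof.
have := bin_fact (leq_addr j s); rewrite addKn => <-.
by rewrite leq_pmull // bin_gt0 leq_addr.
Qed.

Lemma leq_count_smul m n : (m.+1 * n.+1 * n.+1 * (m + n).+1 <= 8 ^ (m + n))%N.
Proof.
apply: (@leq_trans (2 ^ m * 2 ^ n * 2 ^ n * 2 ^ (m + n))).
  by apply: leq_mul; [apply: leq_mul; [apply: leq_mul|]|]; apply: ltn_expl.
by rewrite -!expnD (_ : 8 = 2 ^ 3)%N // -expnM leq_exp2l //; lia.
Qed.

Section HalfSums.
Variable T : realFieldType.
Local Notation half e := ((2^-1 : T) ^+ e).

Lemma sum_halves n : \sum_(i < n) half i.+1 <= 1.
Proof.
have -> : \sum_(i < n) half i.+1 = 1 - half n.
  elim: n => [|n IH]; first by rewrite big_ord0 expr0 subrr.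
  by rewrite big_ord_recr /= IH exprS; field.
by rewrite gerDl oppr_le0 exprn_ge0 // invr_ge0.
Qed.

Lemma sum_halves_rev n : \sum_(i < n) half (n - i) <= 1.
Proof.
case: n => [|n]; first by rewrite big_ord0.
rewrite (reindex_inj rev_ord_inj) /=.
rewrite (eq_bigr (fun i : 'I_n.+1 => half i.+1)) ?sum_halves // => i _.
by rewrite subnA ?subnn ?add0n // ltnW.
Qed.

End HalfSums.

Lemma ler_radius_trade (T : realFieldType) (c a M N : T) (p0 k p i t : nat) :
  0 <= c -> 0 < a -> a <= M -> a <= N -> c * M ^+ p0 * a <= N ->
  (0 < t)%N -> (k + p0 = p + i)%N ->
  c * M ^+ p * a ^+ (i + t) <= M ^+ k * N ^+ t.
Proof.
move=> hc ha haM haN hN; case: t => [//|t] _ hk.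
have hM : 0 < M := lt_le_trans ha haM.
have ha0 := ltW ha.
rewrite -(ler_pM2l (exprn_gt0 p0 hM)).
have -> : M ^+ p0 * (M ^+ k * N ^+ t.+1) = M ^+ p * M ^+ i * (N * N ^+ t).
  by rewrite mulrA -!exprD addnC hk exprS.
have -> : M ^+ p0 * (c * M ^+ p * a ^+ (i + t.+1)) =
    M ^+ p * a ^+ i * (c * M ^+ p0 * a * a ^+ t) by rewrite addnS exprS exprD; ring.
have hM0 := ltW hM.
apply: ler_pM; rewrite ?mulr_ge0 ?exprn_ge0 //.
  by rewrite ler_wpM2l ?exprn_ge0 // lerXn2r ?nnegrE.
by apply: ler_pM; rewrite ?mulr_ge0 ?exprn_ge0 // lerXn2r ?nnegrE // (le_trans ha0).
Qed.

Section Coefficients.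
Variable R : realType.
Local Notation C := R[i].

(* Real-valued modulus, so that all estimates take place in the ordered field [R]. *)
Definition cnorm (x : C) : R := Normc.normc x.
Arguments cnorm : simpl never.

Lemma cnormE (x : C) : `|x| = (cnorm x)%:C%C.
Proof. by []. Qed.

Lemma cnorm_ge0 x : 0 <= cnorm x.
Proof. by case: x => a b; rewrite /cnorm /= sqrtr_ge0. Qed.

Lemma cnorm0 : cnorm 0 = 0.
Proof. exact: Normc.normc0. Qed.

Lemma cnorm_nat n : cnorm n%:R = n%:R.
Proof. by rewrite /cnorm normcMn Normc.normc1. Qed.

Lemma cnormM x y : cnorm (x * y) = cnorm x * cnorm y.
Proof. exact: Normc.normcM. Qed.

Lemma ler_cnormD x y : cnorm (x + y) <= cnorm x + cnorm y.
Proof. exact: le_normcD. Qed.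

Lemma cnormN x : cnorm (- x) = cnorm x.
Proof. exact: normcN. Qed.

Lemma ler_cnormB x y : cnorm (x - y) <= cnorm x + cnorm y.
Proof. by rewrite -(cnormN y) ler_cnormD. Qed.

Lemma ler_cnorm_sum (I : Type) (s : seq I) (P : pred I) (F : I -> C) :
  cnorm (\sum_(i <- s | P i) F i) <= \sum_(i <- s | P i) cnorm (F i).
Proof.
apply: (big_ind2 (fun x y => cnorm x <= y)); first by rewrite cnorm0.
  by move=> x1 y1 x2 y2 h1 h2; apply: le_trans (ler_cnormD _ _) (lerD h1 h2).
by [].
Qed.

Lemma ler_cnorm_sum_const n (F : 'I_n -> C) (B : R) :
  (forall i, cnorm (F i) <= B) -> cnorm (\sum_(i < n) F i) <= n%:R * B.
Proof.
move=> hF; apply: le_trans (ler_cnorm_sum _ _ _) _.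
by rewrite mulr_natl -[n in _ *+ n]card_ord -sumr_const ler_sum.
Qed.

Lemma ler_cnorm_sum_weighted n (F : 'I_n -> C) (c : R) (w : 'I_n -> R) :
  0 <= c -> \sum_(i < n) w i <= 1 -> (forall i, cnorm (F i) <= c * w i) ->
  cnorm (\sum_(i < n) F i) <= c.
Proof.
move=> hc hw hF; apply: le_trans (ler_cnorm_sum _ _ _) _.
apply: le_trans (_ : \sum_(i < n) c * w i <= _); first exact: ler_sum.
by rewrite -mulr_sumr -[leRHS]mulr1; apply: ler_wpM2l.
Qed.

Lemma reord_supp q r i j : reord R q r i j != 0 ->
  [/\ (i <= r)%N, (q <= j)%N & (i + j = q + r)%N].
Proof.
elim: r i j => [|r IH] i j /=.
  by case: i => [|i]; case: (j =P q) => [->|] //=; rewrite ?eqxx ?andbF // addn0.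
have [|] := eqVneq (if i is i'.+1 then reord R q r i' j else 0) 0 => [-> | ].
  case: j => [|j]; first by rewrite subr0 eqxx.
  by rewrite sub0r oppr_eq0 mulf_eq0 negb_or => /andP[_ /IH[? ? ?]]; split; lia.
by case: i => [|i]; rewrite ?eqxx // => /IH[? ? ?] _; split; lia.
Qed.

Lemma reord_diag q r i : reord R q r i q = (i == r)%:R.
Proof.
elim: r i => [|r IH] i /=; first by rewrite eqxx andbT.
have -> : (if q is j.+1 then j%:R * reord R q r i j else 0) = 0.
  case: q IH => [|j] IH //.
  have [->|/reord_supp[_ ? _]] := eqVneq (reord R j.+1 r i j) 0; first exact: mulr0.
  lia.
by rewrite subr0; case: i.
Qed.

Lemma reord_bound q r i j : (q`!)%:R * cnorm (reord R q r i j) <= (2 ^ r * j`!)%:R.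
Proof.
elim: r i j => [|r IH] i j /=.
  case: i => [|i]; case: (j =P q) => [->|] /=; rewrite ?cnorm_nat ?cnorm0 ?mulr0 //.
  by rewrite mulr1 mul1n.
rewrite expnS -mulnA mulSn mul1n natrD.
apply: le_trans (ler_wpM2l (ler0n _ _) (ler_cnormB _ _)) _.
rewrite mulrDr; apply: lerD.
  by case: i => [|i]; rewrite ?cnorm0 ?mulr0 ?ler0n ?IH.
case: j => [|j]; first by rewrite cnorm0 mulr0 ler0n.
rewrite cnormM cnorm_nat mulrCA factS mulnCA natrM.
apply: ler_pM; [exact: ler0n | exact: mulr_ge0 (ler0n _ _) (cnorm_ge0 _) | | exact: IH].
by rewrite ler_nat.
Qed.

Lemma reord_fact_bound q r s n i : (s <= n)%N ->
  (q`! * s`!)%:R * cnorm (reord R q r i (n - s)) <= (2 ^ r * n`!)%:R.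
Proof.
move=> hs; rewrite natrM mulrAC.
apply: le_trans (ler_wpM2r (ler0n _ _) (reord_bound _ _ _ _)) _.
rewrite -natrM ler_nat -mulnA leq_mul2l mulnC.
by have := leq_fact_mul s (n - s); rewrite subnKC // orbC => ->.
Qed.

Lemma ler_cnorm_term (x y : C) (A B : R) q r s n i :
  (s <= n)%N -> 0 <= A -> 0 <= B ->
  cnorm x <= A * (q`!)%:R -> cnorm y <= B * (s`!)%:R ->
  cnorm (x * y * reord R q r i (n - s)) <= A * B * (2 ^ r * n`!)%:R.
Proof.
move=> hs hA hB hx hy; rewrite !cnormM.
have hxy := ler_pM (cnorm_ge0 _) (cnorm_ge0 _) hx hy.
apply: le_trans (ler_wpM2r (cnorm_ge0 _) hxy) _.
have -> : A * (q`!)%:R * (B * (s`!)%:R) * cnorm (reord R q r i (n - s)) =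
    A * B * ((q`! * s`!)%:R * cnorm (reord R q r i (n - s))) by rewrite natrM; ring.
by apply: ler_wpM2l; [exact: mulr_ge0 | exact: reord_fact_bound].
Qed.

Definition coef_bound (K rho : R) (F : series R) :=
  forall p q, cnorm (F p q) <= K * rho ^+ (p + q) * (q`!)%:R.

Lemma convE (F : series R) :
  conv F <-> exists rho, 1 < rho /\ exists K, 0 < K /\ coef_bound K rho F.
Proof.
by split=> -[rho [? [K [? hF]]]]; exists rho; split=> //; exists K; split=> // p q;
  move: (hF p q); rewrite cnormE lecR.
Qed.

Lemma coef_boundW (K rho rho' : R) (F : series R) : 0 <= K -> 0 <= rho <= rho' ->
  coef_bound K rho F -> coef_bound K rho' F.
Proof.
move=> hK /andP[hr hrr'] hF p q; apply: le_trans (hF p q) _.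
rewrite ler_pM2r ?ltr0n ?fact_gt0 // ler_wpM2l //.
by apply: lerXn2r; rewrite ?nnegrE // (le_trans hr).
Qed.

Lemma conv_mono p0 q0 : conv (mono R p0 q0).
Proof.
apply/convE; exists 2; split; first by rewrite ltr1n.
exists 1; split=> // p q; rewrite /mono cnorm_nat mul1r.
apply: le_trans (_ : 1 <= _); first by case: (_ && _).
by apply: mulr_ege1; [apply: exprn_ege1; rewrite ler1n | rewrite ler1n fact_gt0].
Qed.

Lemma conv_sadd (F G : series R) : conv F -> conv G -> conv (sadd F G).
Proof.
move=> /convE[rF [hrF [KF [hKF hF]]]] /convE[rG [hrG [KG [hKG hG]]]].
apply/convE; exists (Num.max rF rG); split; first by rewrite lt_max hrF.
exists (KF + KG); split; first exact: addr_gt0.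
have hrF0 : 0 <= rF := ltW (lt_trans ltr01 hrF).
have hrG0 : 0 <= rG := ltW (lt_trans ltr01 hrG).
move=> p q; apply: le_trans (ler_cnormD _ _) _; rewrite !mulrDl; apply: lerD.
  by apply: coef_boundW (ltW hKF) _ hF p q; rewrite hrF0 le_max lexx.
by apply: coef_boundW (ltW hKG) _ hG p q; rewrite hrG0 le_max lexx orbT.
Qed.

Lemma coef_bound_smul (KF KG rho : R) (F G : series R) :
  0 <= KF -> 0 <= KG -> 1 <= rho ->
  coef_bound KF rho F -> coef_bound KG rho G ->
  coef_bound (KF * KG) (16 * rho) (smul F G).
Proof.
move=> hKF hKG hrho hF hG m n.
set B := KF * KG * rho ^+ (m + n) * (n`!)%:R.
have hrho0 : 0 <= rho := le_trans ler01 hrho.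
have hB : 0 <= B by rewrite /B !mulr_ge0 ?exprn_ge0 ?ler0n.
have eB : B = KF * KG * rho ^+ (m + n) * (n`!)%:R by [].
have hterm (p : 'I_m.+1) (s : 'I_n.+1) (q : 'I_n.+1) (r : 'I_(m + n).+1) :
    cnorm (F p q * G r s * reord R q r (m - p) (n - s)) <= B * 2 ^+ (m + n).
  have [->|/reord_supp[? ? ?]] := eqVneq (reord R q r (m - p) (n - s)) 0.
    by rewrite mulr0 cnorm0 mulr_ge0 ?exprn_ge0.
  have hp := ltn_ord p; have hs := ltn_ord s.
  have hsn : (s <= n)%N by rewrite -ltnS.
  have hKFr := mulr_ge0 hKF (exprn_ge0 (p + q) hrho0).
  have hKGr := mulr_ge0 hKG (exprn_ge0 (r + s) hrho0).
  apply: le_trans (ler_cnorm_term r (m - p) hsn hKFr hKGr (hF p q) (hG r s)) _.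
  have -> : KF * rho ^+ (p + q) * (KG * rho ^+ (r + s)) * (2 ^ r * n`!)%:R = B * 2 ^+ r.
    rewrite /B; have -> : rho ^+ (m + n) = rho ^+ (p + q) * rho ^+ (r + s).
      by rewrite -exprD; congr (_ ^+ _); lia.
    by rewrite natrM natrX; ring.
  by apply: ler_wpM2l => //; apply: ler_weXn2l; [rewrite ler1n | lia].
clearbody B.
have hB2 : 0 <= B * 2 ^+ (m + n) by rewrite mulr_ge0 ?exprn_ge0.
apply: le_trans (_ : (m.+1 * n.+1 * n.+1 * (m + n).+1)%:R * (B * 2 ^+ (m + n)) <= _).
  rewrite !natrM -!mulrA.
  do 3!apply: ler_cnorm_sum_const => ?; exact: ler_cnorm_sum_const.
apply: le_trans (ler_wpM2r hB2 (_ : _ <= (8 ^ (m + n))%:R)) _.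
  by rewrite ler_nat leq_count_smul.
rewrite eB natrX (_ : 16 * rho = 8 * 2 * rho); last by rewrite -natrM.
by rewrite !exprMn le_eqVlt; apply/orP; left; apply/eqP; ring.
Qed.

Lemma conv_smul (F G : series R) : conv F -> conv G -> conv (smul F G).
Proof.
move=> /convE[rF [hrF [KF [hKF hF]]]] /convE[rG [hrG [KG [hKG hG]]]].
set rho := Num.max rF rG.
have hrho : 1 <= rho by rewrite le_max (ltW hrF).
have hrF0 : 0 <= rF := ltW (lt_trans ltr01 hrF).
have hrG0 : 0 <= rG := ltW (lt_trans ltr01 hrG).
have hF' : coef_bound KF rho F.
  by apply: coef_boundW (ltW hKF) _ hF; rewrite hrF0 le_max lexx.
have hG' : coef_bound KG rho G.
  by apply: coef_boundW (ltW hKG) _ hG; rewrite hrG0 le_max lexx orbT.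
apply/convE; exists (16 * rho); split; first lra.
exists (KF * KG); split; first exact: mulr_gt0.
exact: coef_bound_smul (ltW hKF) (ltW hKG) hrho hF' hG'.
Qed.

Lemma smul_mono_lt p0 q0 (F : series R) m n : (n < q0)%N ->
  smul (mono R p0 q0) F m n = 0.
Proof.
move=> hn; do 2!(apply: big1 => ? _); apply: big1 => q _; apply: big1 => ? _.
have hq : (q != q0 :> nat) by rewrite neq_ltn (leq_trans (ltn_ord q)).
by rewrite /mono (negbTE hq) andbF !mul0r.
Qed.

Section Cancellation.
Variables (U X : series R) (p0 : nat).
Hypothesis X_row0 : forall r, X r 0 = (r == p0)%:R.

Definition smul_lower m n : C :=
  \sum_(p < m.+1) \sum_(s < n.+1) \sum_(q < n) \sum_(r < (m + n).+1)
    U p q * X r s * reord R q r (m - p) (n - s).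

Lemma smul_top_row m n : (p0 <= m)%N ->
  \sum_(p < m.+1) \sum_(s < n.+1) \sum_(r < (m + n).+1)
    U p n * X r s * reord R n r (m - p) (n - s) = U (m - p0)%N n.
Proof.
move=> hp0.
have row_sum (p : 'I_m.+1) : \sum_(s < n.+1) \sum_(r < (m + n).+1)
    U p n * X r s * reord R n r (m - p) (n - s) = U p n * ((m - p)%N == p0)%:R.
  rewrite big_ord_recl [X in _ + X]big1 => [|s _]; last first.
    apply: big1 => r _.
    have [->|/reord_supp[_ hsn _]] := eqVneq (reord R n r (m - p) (n - lift ord0 s)) 0.
      exact: mulr0.
    by move: hsn (ltn_ord s); rewrite /= /bump /=; lia.
  have hr : (p0 < (m + n).+1)%N by lia.
  rewrite addr0 subn0 (bigD1 (Ordinal hr)) //= big1 => [|r].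
    by rewrite X_row0 eqxx mulr1 reord_diag addr0.
  by rewrite -val_eqE /= X_row0 => /negbTE ->; rewrite mulr0 mul0r.
have hp : (m - p0 < m.+1)%N by rewrite ltnS leq_subr.
rewrite (eq_bigr _ (fun p _ => row_sum p)) (bigD1 (Ordinal hp)) //= subKn // eqxx mulr1.
rewrite big1 ?addr0 // => p; rewrite -val_eqE /= => hpm.
suff /negbTE -> : (m - p != p0)%N by rewrite mulr0.
by apply: contra hpm => /eqP <-; rewrite subKn // -ltnS.
Qed.

Lemma smulE_lower m n : (p0 <= m)%N -> smul U X m n = smul_lower m n + U (m - p0)%N n.
Proof.
move=> hp0; rewrite -smul_top_row // /smul /smul_lower -big_split; apply: eq_bigr => p _.
by rewrite -big_split; apply: eq_bigr => s _; rewrite big_ord_recr.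
Qed.

Variables (CX RX K M N : R).
Hypotheses (CX_ge0 : 0 <= CX) (RX_ge1 : 1 <= RX) (X_bound : coef_bound CX RX X).
Hypotheses (K_ge0 : 0 <= K) (M_ge : 8 * RX <= M) (M_le_N : M <= N).
Hypothesis N_ge : 16 * CX * M ^+ p0 * (8 * RX) <= N.

Let RX_ge0 : 0 <= RX := le_trans ler01 RX_ge1.
Let M_ge0 : 0 <= M := le_trans (mulr_ge0 (ler0n _ 8) RX_ge0) M_ge.
Let N_ge0 : 0 <= N := le_trans M_ge0 M_le_N.

Local Notation half e := ((2^-1 : R) ^+ e).

(* The factors [half _] are the weights of the summation indices p, s, q, r of
   [smul_lower]; each family of weights sums to at most 1. *)
Lemma lower_term_weight k n p q r s i t :
  (r + s = i + t)%N -> (q + t = n)%N -> (k + p0 = p + i)%N -> (0 < t)%N ->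
  K * M ^+ p * N ^+ q * (CX * RX ^+ (r + s)) * (2 ^ r * n`!)%:R <=
  K * M ^+ k * N ^+ n * (n`!)%:R / 2 * half i.+1 * half s.+1 * half t * half r.+1.
Proof.
move=> hrs hqt hk ht.
have hKN : 0 <= K * N ^+ q * (n`!)%:R by rewrite !mulr_ge0 ?exprn_ge0.
have h8RX : 0 < 8 * RX by rewrite mulr_gt0 // (lt_le_trans ltr01).
have hkey := ler_radius_trade (mulr_ge0 (ler0n _ 16) CX_ge0) h8RX M_ge
  (le_trans M_ge M_le_N) N_ge ht hk.
apply: le_trans (_ : K * N ^+ q * (n`!)%:R * (CX * M ^+ p * (2 * RX) ^+ (i + t)) <= _).
  rewrite natrM natrX -hrs exprMn [2 ^+ (r + s)]exprD.
  rewrite [leRHS](_ : _ = K * M ^+ p * N ^+ q * (CX * RX ^+ (r + s)) *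
    (2 ^+ r * (n`!)%:R) * 2 ^+ s); last by ring.
  by rewrite ler_peMr ?exprn_ege1 ?ler1n // !mulr_ge0 ?exprn_ge0.
have -> : K * M ^+ k * N ^+ n * (n`!)%:R / 2 * half i.+1 * half s.+1 * half t * half r.+1
    = K * N ^+ q * (n`!)%:R * (M ^+ k * N ^+ t * half (i + t + (i + t) + 4)).
  rewrite -hqt exprD (_ : (i + t + (i + t) + 4 = 1 + i.+1 + s.+1 + t + r.+1)%N); last by lia.
  by rewrite !exprD expr1; ring.
rewrite ler_wpM2l //.
have -> : CX * M ^+ p * (2 * RX) ^+ (i + t) =
    16 * CX * M ^+ p * (8 * RX) ^+ (i + t) * half (i + t + (i + t) + 4).
  rewrite (_ : 2 * RX = 8 * RX * 2^-1 * 2^-1); last by field.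
  by rewrite !exprMn !exprD; field.
by rewrite ler_wpM2r ?exprn_ge0 ?invr_ge0.
Qed.

Lemma lower_term_bound k n p s q r :
  (forall q', (q' < n)%N -> forall p',
     cnorm (U p' q') <= K * M ^+ p' * N ^+ q' * (q'`!)%:R) ->
  (p <= k + p0)%N -> (s <= n)%N -> (q < n)%N ->
  cnorm (U p q * X r s * reord R q r (k + p0 - p) (n - s)) <=
  K * M ^+ k * N ^+ n * (n`!)%:R / 2 *
    half ((k + p0).+1 - p) * half s.+1 * half (n - q) * half r.+1.
Proof.
move=> IH hp hs hq.
have [->|/reord_supp[_ _ hij]] := eqVneq (reord R q r (k + p0 - p) (n - s)) 0.
  by rewrite mulr0 cnorm0 !mulr_ge0 ?exprn_ge0 ?invr_ge0.
have hA : 0 <= K * M ^+ p * N ^+ q by rewrite !mulr_ge0 ?exprn_ge0.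
have hB : 0 <= CX * RX ^+ (r + s) by rewrite mulr_ge0 ?exprn_ge0.
apply: le_trans (ler_cnorm_term r (k + p0 - p) hs hA hB (IH q hq p) (X_bound r s)) _.
rewrite subSn //; apply: lower_term_weight; [|exact: subnKC (ltnW hq)|by rewrite subnKC|].
- lia.
- by rewrite subn_gt0.
Qed.

Lemma cnorm_smul_lower k n :
  (forall q, (q < n)%N -> forall p,
     cnorm (U p q) <= K * M ^+ p * N ^+ q * (q`!)%:R) ->
  cnorm (smul_lower (k + p0) n) <= K * M ^+ k * N ^+ n * (n`!)%:R / 2.
Proof.
move=> IH.
have hh e : 0 <= half e by rewrite exprn_ge0 ?invr_ge0.
have hT : 0 <= K * M ^+ k * N ^+ n * (n`!)%:R / 2.
  by rewrite !mulr_ge0 ?invr_ge0 ?exprn_ge0.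
set T := K * _ * _ * _ / 2 in hT *.
have hTw (c : R) e : 0 <= c -> 0 <= c * half e by move=> hc; rewrite mulr_ge0.
apply: (ler_cnorm_sum_weighted hT (sum_halves_rev _ _)) => p.
apply: (ler_cnorm_sum_weighted (hTw _ _ hT) (sum_halves _ _)) => s.
apply: (ler_cnorm_sum_weighted (hTw _ _ (hTw _ _ hT)) (sum_halves_rev _ _)) => q.
apply: (ler_cnorm_sum_weighted (hTw _ _ (hTw _ _ (hTw _ _ hT))) (sum_halves _ _)) => r.
by apply: lower_term_bound; rewrite // -ltnS.
Qed.

Hypothesis smul_bound : forall k n,
  cnorm (smul U X (k + p0)%N n) <= K * M ^+ k * N ^+ n * (n`!)%:R / 2.

Lemma coef_bound_cancel k n : cnorm (U k n) <= K * M ^+ k * N ^+ n * (n`!)%:R.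
Proof.
elim/ltn_ind: n k => n IH k.
have := smulE_lower n (leq_addl k p0); rewrite addnK => hsplit.
have -> : U k n = smul U X (k + p0)%N n - smul_lower (k + p0) n.
  by rewrite hsplit addrC addKr.
apply: le_trans (ler_cnormB _ _) _.
by rewrite [leRHS]splitr lerD // cnorm_smul_lower.
Qed.

End Cancellation.

Lemma conv_smul_cancel (U X : series R) (p0 : nat) :
  (forall r, X r 0 = (r == p0)%:R) -> conv X -> conv (smul U X) -> conv U.
Proof.
move=> hX0 /convE[RX [hRX [CX [hCX hX]]]] /convE[RY [hRY [CY [hCY hY]]]].
pose M := Num.max (8 * RX) RY.
pose N := Num.max M (16 * CX * M ^+ p0 * (8 * RX)).
pose K := 2 * CY * RY ^+ p0.
have hRY0 : 0 <= RY := ltW (lt_trans ltr01 hRY).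
have hM8 : 8 * RX <= M by rewrite le_max lexx.
have hRYM : RY <= M by rewrite le_max lexx orbT.
have hMN : M <= N by rewrite le_max lexx.
have hN : 16 * CX * M ^+ p0 * (8 * RX) <= N by rewrite le_max lexx orbT.
have hM0 : 0 <= M := le_trans hRY0 hRYM.
have hN1 : 1 < N by apply: lt_le_trans hMN; apply: lt_le_trans hM8; lra.
have hK : 0 <= K by rewrite !mulr_ge0 ?exprn_ge0 // ltW.
have hYb k n : cnorm (smul U X (k + p0)%N n) <= K * M ^+ k * N ^+ n * (n`!)%:R / 2.
  apply: le_trans (hY _ _) _.
  rewrite [leRHS](_ : _ = CY * RY ^+ p0 * (M ^+ k * N ^+ n) * (n`!)%:R); last first.
    by rewrite /K; field.
  rewrite ler_pM2r ?ltr0n ?fact_gt0 // addnAC addnC !exprD mulrA.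
  rewrite ler_wpM2l ?mulr_ge0 ?exprn_ge0 ?(ltW hCY) //.
  by rewrite ler_pM ?exprn_ge0 // lerXn2r ?nnegrE // (le_trans _ hMN).
have hUb := coef_bound_cancel hX0 (ltW hCX) (ltW hRX) hX hK hM8 hMN hN hYb.
apply/convE; exists N; split=> //; exists K; split.
  by rewrite !mulr_gt0 ?exprn_gt0 // (lt_trans ltr01).
move=> p q; apply: le_trans (hUb p q) _.
rewrite ler_pM2r ?ltr0n ?fact_gt0 // exprD mulrA ler_wpM2r ?exprn_ge0 ?ler_wpM2l //.
  exact: le_trans hM0 hMN.
by rewrite lerXn2r ?nnegrE // (le_trans hM0).
Qed.

End Coefficients.

Theorem proposition1p4p2 (R : realType) (p0 : nat) (z U : series R) :
  conv z ->
  conv (smul U (sadd (mono R p0 0) (smul (mono R 0 1) z))) ->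
  conv U.
Proof.
move=> hz; apply: conv_smul_cancel.
  by move=> r; rewrite /sadd smul_mono_lt // addr0 /mono andbT.
exact: conv_sadd (conv_mono _ _ _) (conv_smul (conv_mono _ _ _) hz).
Qed.
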